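(* Let $n \geqslant 3$ and let $C_{n+1}$ be the cycle with vertex set $\{0,1,\ldots,n\}$ and edges $\{j,j+1\}$ for $0\leqslant j<n$ together with $\{n,0\}$. Then the word $012\ldots n$ does not occur as a subword (contiguous factor) of any uniform word whose alternating graph is $C_{n+1}$.
   Context: A word is uniform if each symbol occurring in it occurs the same number of times. A word $w$ is a subword of $v=v_0v_1\ldots v_N$ if $w=v_mv_{m+1}\ldots v_{m+k}$ for some $m,k$. Two distinct symbols $a,b$ alternate in a word $u$ if both occur in $u$ and, after erasing all other letters of $u$, one obtains a factor of $abab\ldots$ or of $baba\ldots$. The alternating graph of a word $u$ is the graph whose vertices are the symbols occurring in $u$, with an edge $(a,b)$ iff $a$ and $b$ alternate in $u$. *)

From mathcomp Require Import all_boot.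
Set Implicit Arguments. Unset Strict Implicit. Unset Printing Implicit Defensive.

Definition uniform (u : seq nat) : Prop :=
  forall a b, a \in u -> b \in u -> count_mem a u = count_mem b u.

Definition alt_word (a b : nat) (m : nat) : seq nat :=
  mkseq (fun i => if odd i then b else a) m.

Definition alternate (u : seq nat) (a b : nat) : Prop :=
  [/\ a != b, a \in u, b \in u &
     exists m, infix [seq x <- u | (x == a) || (x == b)] (alt_word a b m)
            \/ infix [seq x <- u | (x == a) || (x == b)] (alt_word b a m)].

Definition cycle_edge (n a b : nat) : bool :=
  [&& a <= n, b <= n &
    [|| b == a.+1, a == b.+1, (a == 0) && (b == n) | (a == n) && (b == 0)]].

Definition altgraph_is_cycle (u : seq nat) (n : nat) : Prop :=
  (forall x, x \in u <-> x <= n) /\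
  (forall a b, alternate u a b <-> cycle_edge n a b).

(* A uniform word u makes a and b alternate exactly when its projection onto
   {a, b} has no two cyclically adjacent equal letters; this is invariant under
   rotation, so we may rotate u to start with 0 1 ... n.  For each edge a < b of
   the cycle, a then occurs before b, so in every prefix the count of a exceeds
   that of b by 0 or 1.  Chaining these inequalities along 0, 1, ..., n and
   closing with the edge {0, n} shows that 0 leads 2 in the same way, which
   forces 0 and 2 to alternate, although they are not adjacent in C_{n+1}. *)

From mathcomp Require Import all_boot zify.
Set Implicit Arguments. Unset Strict Implicit. Unset Printing Implicit Defensive.

Definition neq_rel {T : eqType} : rel T := fun x y => x != y.

Notation project a b u := [seq x <- u | (x == a) || (x == b)].

Lemma project_sym (T : eqType) (a b : T) (u : seq T) : project b a u = project a b u.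
Proof. by apply: eq_filter => x; rewrite orbC. Qed.

Lemma all_pred2_sym (T : eqType) (a b : T) (s : seq T) :
  all (pred2 b a) s = all (pred2 a b) s.
Proof. by apply: eq_all => x; rewrite /= orbC. Qed.

Lemma count_project (T : eqType) (a b z : T) (u : seq T) :
  (z == a) || (z == b) -> count_mem z (project a b u) = count_mem z u.
Proof.
move=> zab; rewrite count_filter; apply: eq_count => y /=.
by case: (eqVneq y z) => [->|].
Qed.

Lemma cycle_filter_rot (T : Type) (e : rel T) (P : pred T) k (s : seq T) :
  cycle e (filter P (rot k s)) = cycle e (filter P s).
Proof.
by rewrite -{2}(cat_take_drop k s) /rot !filter_cat -rot_size_cat rot_cycle.
Qed.

Lemma alt_wordS x y m : alt_word x y m.+1 = x :: alt_word y x m.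
Proof.
rewrite /alt_word /mkseq /= -[1]/(1 + 0) iotaDl -map_comp.
by congr (_ :: _); apply: eq_map => i /=; case: (odd i).
Qed.

Lemma count_alt_word x y m : x != y ->
  count_mem x (alt_word x y m) = odd m + count_mem y (alt_word x y m).
Proof.
elim: m x y => [|m IH] x y xy //.
rewrite !alt_wordS /= eqxx (negbTE xy) IH 1?eq_sym //.
by case: (odd m).
Qed.

Lemma path_alt_word x y m : x != y -> path neq_rel y (alt_word x y m).
Proof.
elim: m x y => [|m IH] x y xy //.
by rewrite alt_wordS /= {1}/neq_rel eq_sym xy IH // eq_sym.
Qed.

Lemma sorted_alt_word x y m : x != y -> sorted neq_rel (alt_word x y m).
Proof.
by case: m => [|m] xy //; rewrite alt_wordS; apply: path_alt_word; rewrite eq_sym.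
Qed.

Lemma cycle_alt_word x y m : x != y -> ~~ odd m -> cycle neq_rel (alt_word x y m).
Proof.
case: m => [|m] xy // odd_m; rewrite alt_wordS /=.
have -> : rcons (alt_word y x m) x = alt_word y x m.+1.
  by move: odd_m => /= /negPn odd_m; rewrite /alt_word mkseqS odd_m.
by apply: path_alt_word; rewrite eq_sym.
Qed.

Lemma cycle_alt_word_balanced x y m : x != y ->
  count_mem x (alt_word x y m) = count_mem y (alt_word x y m) ->
  cycle neq_rel (alt_word x y m).
Proof.
move=> xy; rewrite count_alt_word // => count_xy.
by apply: cycle_alt_word => //; apply/negP => odd_m; rewrite odd_m in count_xy; lia.
Qed.

Lemma path_alt_wordE x y t : x != y -> all (pred2 x y) t -> path neq_rel x t ->
  x :: t = alt_word x y (size t).+1.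
Proof.
elim: t x y => [|z t IH] x y xy //.
rewrite /= => /andP [/pred2P [-> | ->] t_xy] /andP [yz t_path].
  by rewrite /neq_rel eqxx in yz.
by rewrite alt_wordS -IH // 1?eq_sym // all_pred2_sym.
Qed.

Lemma sorted_two_letters (a b : nat) s : a != b -> all (pred2 a b) s ->
  sorted neq_rel s -> s = alt_word a b (size s) \/ s = alt_word b a (size s).
Proof.
case: s => [|x t] ab; first by left.
rewrite [all _ _]/= => /andP [/pred2P [-> | ->] t_ab] t_path.
  by left; apply: path_alt_wordE.
by right; apply: path_alt_wordE; rewrite 1?eq_sym // all_pred2_sym.
Qed.

Lemma cycle_balanced (a b : nat) s : a != b -> all (pred2 a b) s -> sorted neq_rel s ->
  count_mem a s = count_mem b s -> cycle neq_rel s.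
Proof.
move=> ab s_ab s_sorted; case: (sorted_two_letters ab s_ab s_sorted) => ->.
  exact: cycle_alt_word_balanced.
by move/esym; apply: cycle_alt_word_balanced; rewrite eq_sym.
Qed.

Lemma alternateE (u : seq nat) a b : uniform u ->
  alternate u a b <-> [/\ a != b, a \in u, b \in u & cycle neq_rel (project a b u)].
Proof.
move=> u_unif; split=> [[ab au bu [m proj_infix]] | [ab au bu proj_cycle]].
  split=> //; apply: (cycle_balanced ab (filter_all _ _)).
    case: proj_infix => /infix_sorted; apply; apply: sorted_alt_word => //.
    by rewrite eq_sym.
  by rewrite !count_project ?eqxx ?orbT //; apply: u_unif.
split=> //; exists (size (project a b u)).
have proj_sorted : sorted neq_rel (project a b u).
  by case: (project a b u) proj_cycle => //= x t; rewrite rcons_path => /andP [].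
by case: (sorted_two_letters ab (filter_all _ _) proj_sorted) => <-;
  [left | right]; apply: infix_refl.
Qed.

Lemma uniform_rot k (u : seq nat) : uniform u -> uniform (rot k u).
Proof.
move=> u_unif a b.
by rewrite !mem_rot !(permP (permEl (perm_rot k u))); apply: u_unif.
Qed.

Lemma alternate_rot k (u : seq nat) a b : uniform u ->
  alternate (rot k u) a b <-> alternate u a b.
Proof.
move=> u_unif.
rewrite (alternateE _ _ u_unif) (alternateE _ _ (uniform_rot (k := k) u_unif)).
by rewrite !mem_rot cycle_filter_rot.
Qed.

Section Leads.
Variable T : eqType.

Definition leads (w : seq T) (a b : T) : Prop := forall j,
  count_mem b (take j w) <= count_mem a (take j w) <= (count_mem b (take j w)).+1.

Lemma leadsE (w : seq T) a b : a != b -> leads w a b <-> path neq_rel b (project a b w).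
Proof.
elim: w a b => [|x w IH] a b ab; first by split=> // j.
have leads_cons : leads (x :: w) a b <-> forall j,
    count_mem b (x :: take j w) <= count_mem a (x :: take j w)
    <= (count_mem b (x :: take j w)).+1.
  by split=> L j; [apply: (L j.+1) | case: j => [|j] //; apply: L].
rewrite leads_cons /=; case: (eqVneq x a) => [->|_] /=.
  rewrite (negbTE ab) {1}/neq_rel eq_sym ab -project_sym -IH 1?eq_sym // /leads.
  by split=> L j; have := L j; rewrite !add0n add1n ltnS andbC.
case: (eqVneq x b) => [->|_] /=.
  by rewrite /neq_rel eqxx; split=> // /(_ 0); rewrite take0.
by rewrite -IH.
Qed.

End Leads.

Lemma leads_chord (w : seq nat) n k : k <= n ->
  (forall i, i < n -> leads w i i.+1) -> leads w 0 n -> leads w 0 k.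
Proof.
move=> kn chain closing j; set c := fun i => count_mem i (take j w).
have c_dec i d : i + d <= n -> c (i + d) <= c i.
  elim: d => [|d IH] idn; first by rewrite addn0.
  rewrite addnS in idn *; case/andP: (chain _ idn j) => c_step _.
  exact: leq_trans c_step (IH (ltnW idn)).
have := c_dec 0 k kn; have := c_dec k (n - k); rewrite add0n subnKC // => /(_ (leqnn n)) cnk ck0.
case/andP: (closing j) => _ c0n.
by rewrite ck0 (leq_trans c0n) // ltnS.
Qed.

Lemma project_iota_cat a b n (v : seq nat) : a < b <= n ->
  exists t, project a b (iota 0 n.+1 ++ v) = a :: t.
Proof.
case/andP=> ab bn.
have -> : n.+1 = a + (n - a).+1 by rewrite addnS subnKC // ltnW // (leq_trans ab bn).
rewrite iotaD -catA filter_cat add0n /= eqxx /=.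
rewrite (@eq_in_filter _ _ pred0) ?filter_pred0; first by eexists.
move=> i; rewrite mem_iota add0n /= => ia.
by rewrite !ltn_eqF // (ltn_trans ia).
Qed.

Lemma alternate_leadsE (u : seq nat) a b t : uniform u -> a != b -> b \in u ->
  project a b u = a :: t -> alternate u a b <-> leads u a b.
Proof.
move=> u_unif ab bu proj_u.
have : a \in project a b u by rewrite proj_u mem_head.
rewrite mem_filter => /andP [_ au].
rewrite (alternateE _ _ u_unif) (leadsE _ ab) proj_u.
split=> [[_ _ _] | /andP [_ t_path]].
  by rewrite /= rcons_path => /andP [-> _]; rewrite andbT /neq_rel eq_sym.
split=> //; apply: (@cycle_balanced a b (a :: t) ab _ t_path).
  by rewrite -proj_u filter_all.
by rewrite -proj_u !count_project ?eqxx ?orbT //; apply: u_unif.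
Qed.

Theorem lemma1 (n : nat) (u : seq nat) :
  3 <= n -> uniform u -> altgraph_is_cycle u n ->
  ~~ infix (iota 0 n.+1) u.
Proof.
move=> n_ge3 u_unif [u_mem u_alt]; apply/negP => /infixP [p [q u_eq]].
set w := rot (size p) u.
have w_eq : w = iota 0 n.+1 ++ (q ++ p) by rewrite /w u_eq rot_size_cat -catA.
have w_unif : uniform w := uniform_rot u_unif.
have leads_edge a b : a < b <= n -> cycle_edge n a b -> leads w a b.
  move=> abn /u_alt /(alternate_rot (size p) _ _ u_unif) alt_ab.
  have [t] := project_iota_cat (q ++ p) abn; rewrite -w_eq => proj_w.
  case/andP: abn => ab bn.
  by apply/(alternate_leadsE w_unif _ _ proj_w); rewrite ?ltn_eqF // mem_rot u_mem.
have w_02 : leads w 0 2.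
  apply: (leads_chord (n := n)) => [|i lt_in|]; first exact: ltnW.
    by apply: leads_edge; rewrite ?ltnSn ?lt_in // /cycle_edge (ltnW lt_in) lt_in eqxx.
  by apply: leads_edge; rewrite /cycle_edge ?leqnn ?eqxx ?orbT // (leq_trans _ n_ge3).
have [t] := @project_iota_cat 0 2 n (q ++ p) (ltnW n_ge3); rewrite -w_eq => proj_w.
have /(alternate_rot (size p) _ _ u_unif) /u_alt : alternate w 0 2.
  by apply/(alternate_leadsE w_unif _ _ proj_w); rewrite // mem_rot u_mem (ltnW n_ge3).
by rewrite /cycle_edge; lia.
Qed.
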